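(* Fix $\mathbf{x}'\in\Omega$ and suppose $\lambda\neq1$. Then $$\inf_{\mathbf{F}\in\mathbb{R}^{3\times2},\ \det(\mathbf{F}^T\mathbf{F})=1} W_{3D}\big((\mathbf{x}',0),[\mathbf{F},\mathbf{b}(\mathbf{F})]\big)>0,$$ where for $\mathbf{F}=[\mathbf{F}_1,\mathbf{F}_2]$, $\mathbf{b}(\mathbf{F})=\frac{\mathbf{F}_1\times\mathbf{F}_2}{|\mathbf{F}_1\times\mathbf{F}_2|^2}$ and $[\mathbf{F},\mathbf{b}(\mathbf{F})]\in\mathbb{R}^{3\times3}$ has columns $\mathbf{F}_1,\mathbf{F}_2,\mathbf{b}(\mathbf{F})$.
   Context: Let $\Omega\subset\mathbb{R}^2$ be a bounded Lipschitz domain. At the point $\mathbf{x}'$ we are given scalars $s,s_0$ with $-1<s,s_0<\infty$ and a unit vector $\mathbf{m}\in\mathbb{S}^1\subset\mathbb{R}^2$, identified with $(\mathbf{m},0)^T\in\mathbb{R}^3$ when needed; $\lambda=\big(\tfrac{s+1}{s_0+1}\big)^{1/3}$. For $\mathbf{G}\in\mathbb{R}^{3\times3}$ with $\mathbf{G}\mathbf{m}\neq0$, set $\mathbf{n}=\mathbf{G}\mathbf{m}/|\mathbf{G}\mathbf{m}|$, $\mathbf{L}_{\mathbf{m}}=(s_0+1)^{-1/3}(\mathrm{Id}_3+s_0\,\mathbf{m}\otimes\mathbf{m})$, $\mathbf{L}_{\mathbf{n}}=(s+1)^{-1/3}(\mathrm{Id}_3+s\,\mathbf{n}\otimes\mathbf{n})$,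 and $$W_{3D}\big((\mathbf{x}',0),\mathbf{G}\big)=\operatorname{tr}\big(\mathbf{G}^T\mathbf{L}_{\mathbf{n}}^{-1}\mathbf{G}\mathbf{L}_{\mathbf{m}}\big)-3 .$$ *)

From HB Require Import structures.
From mathcomp Require Import all_boot all_order all_algebra.
From mathcomp Require Import all_classical all_reals all_analysis.
Set Implicit Arguments. Unset Strict Implicit. Unset Printing Implicit Defensive.
Import Order.TTheory GRing.Theory Num.Theory.
Local Open Scope ring_scope.

Section Defs.
Variable R : realType.

Definition vnorm3 (v : 'cV[R]_3) : R := Num.sqrt (\sum_(i < 3) v i 0 ^+ 2).

Definition cross3 (u v : 'cV[R]_3) : 'cV[R]_3 :=
  \col_(i < 3)
    (if (i == 0 :> nat) then u 1 0 * v 2 0 - u 2 0 * v 1 0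
     else if (i == 1 :> nat) then u 2 0 * v 0 0 - u 0 0 * v 2 0
     else u 0 0 * v 1 0 - u 1 0 * v 0 0).

Definition embed3 (m : 'cV[R]_2) : 'cV[R]_3 :=
  \col_(i < 3) (if (i < 2)%N then m (inord i) 0 else 0).

Definition bvec (F : 'M[R]_(3,2)) : 'cV[R]_3 :=
  let c := cross3 (col 0 F) (col 1 F) in (vnorm3 c ^+ 2)^-1 *: c.

Definition augment (F : 'M[R]_(3,2)) : 'M[R]_3 :=
  \matrix_(i < 3, j < 3)
    (if (j == 0 :> nat) then F i 0 else if (j == 1 :> nat) then F i 1
     else bvec F i 0).

Definition Lmat (s : R) (v : 'cV[R]_3) : 'M[R]_3 :=
  ((s + 1) `^ (- (1 / 3))) *: (1%:M + s *: (v *m v^T)).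

(* W_3D((x',0),G) with s = s(x'), s0 = s0(x'), m = m(x') *)
Definition W3D (s s0 : R) (m : 'cV[R]_2) (G : 'M[R]_3) : R :=
  let Gm := G *m embed3 m in
  let n := (vnorm3 Gm)^-1 *: Gm in
  \tr (G^T *m invmx (Lmat s n) *m G *m Lmat s0 (embed3 m)) - 3.

End Defs.

(* Write C = F^T F (so det C = 1), v = F m, N = |v|^2 = m.Cm and n = v/|v|.
   Since det C = 1, b(F) is the unit normal F1 x F2, hence [F, b(F)] m = v,
   tr([F, b]^T [F, b]) = tr C + 1 and |[F, b]^T v|^2 = |Cm|^2.  Inverting L_n by
   the rank-one update formula and expanding the trace gives
     W + 3 = lambda (tr C + 1 + s0 N - s/(s+1) (|Cm|^2/N + s0 N)).
   Cayley-Hamilton for the 2x2 matrix C gives |Cm|^2 = N tr C - 1 and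
   Cauchy-Schwarz gives |Cm|^2 >= N^2, so
     W + 3 >= lambda ((s0+1)/(s+1) N + 1/N + 1) = N/t^4 + t^2/N + t^2
   with t = sqrt lambda, which is at least 2/t + t^2 by AM-GM.  Thus
   W >= 2/t + t^2 - 3 = (t-1)^2 (t+2)/t > 0 because t <> 1. *)

From HB Require Import structures.
From mathcomp Require Import all_boot all_order all_algebra.
From mathcomp Require Import all_classical all_reals all_analysis.
From mathcomp Require Import ring lra.
Import Order.TTheory GRing.Theory Num.Theory.
Local Open Scope ring_scope.

Set Implicit Arguments. Unset Strict Implicit. Unset Printing Implicit Defensive.

Definition dotmx (R : pzRingType) k (u v : 'cV[R]_k) : R := (u^T *m v) 0 0.

Section Dot.
Variables (R : comPzRingType) (k : nat).
Implicit Types (u v w : 'cV[R]_k).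

Lemma dotmxE u v : dotmx u v = \sum_i u i 0 * v i 0.
Proof. by rewrite /dotmx mxE; apply: eq_bigr => i _; rewrite mxE. Qed.

Lemma mx11_dotmx u v : u^T *m v = (dotmx u v)%:M.
Proof. exact: mx11_scalar. Qed.

Lemma dotmxC u v : dotmx u v = dotmx v u.
Proof. by rewrite !dotmxE; apply: eq_bigr => i _; rewrite mulrC. Qed.

Lemma dotmx_mulmxr l u (A : 'M[R]_(k, l)) (v : 'cV[R]_l) :
  dotmx u (A *m v) = dotmx (A^T *m u) v.
Proof. by rewrite /dotmx trmx_mul trmxK mulmxA. Qed.

Lemma mxtrace_outer u v : \tr (u *m v^T) = dotmx v u.
Proof. by rewrite mxtrace_mulC mx11_dotmx mxtrace_scalar mulr1n. Qed.

Lemma dotmxZl a u v : dotmx (a *: u) v = a * dotmx u v.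
Proof.
by rewrite !dotmxE mulr_sumr; apply: eq_bigr => i _; rewrite mxE mulrA.
Qed.

Lemma dotmxZr a u v : dotmx u (a *: v) = a * dotmx u v.
Proof. by rewrite dotmxC dotmxZl dotmxC. Qed.

Lemma dotmxBl u v w : dotmx (u - v) w = dotmx u w - dotmx v w.
Proof.
by rewrite !dotmxE -sumrB; apply: eq_bigr => i _; rewrite !mxE mulrBl.
Qed.

Lemma dotmxBr u v w : dotmx u (v - w) = dotmx u v - dotmx u w.
Proof. by rewrite dotmxC dotmxBl !(dotmxC u). Qed.

Lemma mxtrace_rank_one_sandwich (G : 'M[R]_k) (e n : 'cV[R]_k) (kappa sigma : R) :
  \tr (G^T *m (1%:M - kappa *: (n *m n^T)) *m G *m (1%:M + sigma *: (e *m e^T)))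
  = \tr (G^T *m G) + sigma * dotmx (G *m e) (G *m e)
    - kappa * dotmx (G^T *m n) (G^T *m n) - kappa * sigma * dotmx n (G *m e) ^+ 2.
Proof.
have trGe : \tr (G^T *m G *m (e *m e^T)) = dotmx (G *m e) (G *m e).
  by rewrite mulmxA -(mulmxA _ G) mxtrace_outer dotmx_mulmxr trmxK.
have trGn : \tr (G^T *m (n *m n^T) *m G) = dotmx (G^T *m n) (G^T *m n).
  by rewrite mulmxA -mulmxA -{2}[G]trmxK -trmx_mul mxtrace_outer.
have trGne : \tr (G^T *m (n *m n^T) *m G *m (e *m e^T)) = dotmx n (G *m e) ^+ 2.
  rewrite -!mulmxA (mulmxA G e) (mulmxA n^T) mx11_dotmx mul_scalar_mx.
  rewrite -!scalemxAr mxtraceZ mulmxA mxtrace_outer.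
  by rewrite (dotmx_mulmxr e) trmxK (dotmxC (G *m e)) expr2.
rewrite mulmxBr mulmx1 !mulmxBl !mulmxDr !mulmx1 -!scalemxAr -!scalemxAl.
rewrite opprD !mxtraceD !raddfN /= !mxtraceZ trGe trGn trGne.
ring.
Qed.
Lemma mxtrace_scale_sandwich (A B X Y : 'M[R]_k) (a b : R) :
  \tr (A *m (a *: X) *m B *m (b *: Y)) = a * b * \tr (A *m X *m B *m Y).
Proof. by rewrite -!scalemxAr -!scalemxAl !mxtraceZ mulrCA mulrA. Qed.

End Dot.

Section RankOneUpdate.
Variables (R : fieldType) (k : nat) (n : 'cV[R]_k) (s : R).
Hypotheses (n_unit : n^T *m n = 1%:M) (s_neq : 1 + s != 0).

Lemma mulmx_rank_one_update :
  (1%:M + s *: (n *m n^T)) *m (1%:M - (s / (1 + s)) *: (n *m n^T)) = 1%:M.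
Proof.
have P_idem : n *m n^T *m (n *m n^T) = n *m n^T.
  by rewrite mulmxA -(mulmxA n) n_unit mulmx1.
rewrite mulmxDl mul1mx mulmxBr mulmx1 -scalemxAl -scalemxAr P_idem.
set P := n *m n^T; apply/matrixP => i j; rewrite !mxE.
by field.
Qed.

Lemma invmx_rank_one_update :
  invmx (1%:M + s *: (n *m n^T)) = 1%:M - (s / (1 + s)) *: (n *m n^T).
Proof.
have := mulmx_rank_one_update; set A := 1%:M + _; set B := 1%:M - _ => AB.
have [A_unit _] := mulmx1_unit AB.
by rewrite -[invmx A]mulmx1 -AB mulmxA mulVmx // mul1mx.
Qed.

End RankOneUpdate.

Lemma dotmx_ge0 (R : realDomainType) k (u : 'cV[R]_k) : 0 <= dotmx u u.
Proof. by rewrite dotmxE sumr_ge0 // => i _; rewrite -expr2 sqr_ge0. Qed.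

Lemma dotmx_unit_sqr_le (R : realDomainType) k (u w : 'cV[R]_k) :
  dotmx u u = 1 -> dotmx u w ^+ 2 <= dotmx w w.
Proof.
move=> u_unit; set a := dotmx u w.
have residual : dotmx (w - a *: u) (w - a *: u) = dotmx w w - a ^+ 2.
  rewrite !(dotmxBl, dotmxBr, dotmxZl, dotmxZr) u_unit (dotmxC w u) -/a.
  ring.
by rewrite -subr_ge0 -residual dotmx_ge0.
Qed.

Lemma sum_ord2 (V : nmodType) (f : 'I_2 -> V) : \sum_i f i = f 0 + f 1.
Proof. by rewrite !big_ord_recr big_ord0 /= add0r; congr (f _ + f _); apply/val_inj. Qed.

Lemma sum_ord3 (V : nmodType) (f : 'I_3 -> V) : \sum_i f i = f 0 + f 1 + f 2.
Proof.
by rewrite !big_ord_recr big_ord0 /= add0r; congr (f _ + f _ + f _); apply/val_inj.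
Qed.

Lemma ord2P (i : 'I_2) : i = 0 \/ i = 1.
Proof. by case: i => [[|[|//]] ?]; [left | right]; apply/val_inj. Qed.

Section Mx22.
Variable R : comPzRingType.
Implicit Types A : 'M[R]_2.

Lemma det_mx22 A : \det A = A 0 0 * A 1 1 - A 0 1 * A 1 0.
Proof.
rewrite (expand_det_row A 0) sum_ord2 /cofactor !det_mx11 !mxE /=.
have -> : lift 0 0 = 1 :> 'I_2 by apply/val_inj.
have -> : lift 1 0 = 0 :> 'I_2 by apply/val_inj.
by rewrite expr0 expr1 mul1r mulN1r mulrN.
Qed.

Lemma mx22_Cayley_Hamilton A : A *m A = \tr A *: A - (\det A)%:M.
Proof.
apply/matrixP => i j; rewrite det_mx22 /mxtrace sum_ord2 !mxE sum_ord2.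
by have [->|->] := ord2P i; have [->|->] := ord2P j; rewrite /= ?mulr1n ?mulr0n; ring.
Qed.

End Mx22.

Lemma dotmx_mx22_sym_det1 (R : comPzRingType) (C : 'M[R]_2) (u : 'cV[R]_2) :
  C^T = C -> \det C = 1 -> dotmx u u = 1 ->
  dotmx (C *m u) (C *m u) = \tr C * dotmx u (C *m u) - 1.
Proof.
move=> C_sym detC u_unit.
rewrite dotmx_mulmxr C_sym mulmxA mx22_Cayley_Hamilton detC mulmxBl -scalemxAl.
by rewrite mul_scalar_mx scale1r dotmxBl dotmxZl u_unit !(dotmxC u).
Qed.

Section Cross.
Variable R : realType.

Lemma vnorm3_sqr (v : 'cV[R]_3) : vnorm3 v ^+ 2 = dotmx v v.
Proof.
rewrite /vnorm3 sqr_sqrtr ?dotmxE //.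
by apply: sumr_ge0 => i _; exact: sqr_ge0.
Qed.

Variable F : 'M[R]_(3, 2).

Lemma dotmx_cross3_gram :
  dotmx (cross3 (col 0 F) (col 1 F)) (cross3 (col 0 F) (col 1 F)) = \det (F^T *m F).
Proof. by rewrite dotmxE sum_ord3 det_mx22 !mxE !sum_ord3 !mxE /=; ring. Qed.

Lemma trmx_mul_cross3 : F^T *m cross3 (col 0 F) (col 1 F) = 0.
Proof.
apply/matrixP => i j; rewrite !mxE sum_ord3 !mxE /=.
by have [->|->] := ord2P i; ring.
Qed.

Hypothesis detF : \det (F^T *m F) = 1.

Lemma bvec_cross3 : bvec F = cross3 (col 0 F) (col 1 F).
Proof. by rewrite /bvec vnorm3_sqr dotmx_cross3_gram detF invr1 scale1r. Qed.

Lemma dotmx_bvec : dotmx (bvec F) (bvec F) = 1.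
Proof. by rewrite bvec_cross3 dotmx_cross3_gram. Qed.

Lemma trmx_mul_bvec : F^T *m bvec F = 0.
Proof. by rewrite bvec_cross3 trmx_mul_cross3. Qed.

End Cross.

(* ['M_3] and ['M_(3, 2 + 1)] agree only up to conversion, so the block-matrix
   lemmas below are instantiated explicitly rather than found by matching. *)
Lemma augmentE (R : realType) (F : 'M[R]_(3, 2)) : augment F = row_mx F (bvec F).
Proof.
apply/matrixP => i j; rewrite mxE -[j](@splitK 2 1).
case: (@fintype.split 2 1 j) => l /=.
- rewrite (row_mxEl F (bvec F) i l : _ = F i l).
  by case: l => [[|[|//]] ?] /=; congr (F i _); exact: val_inj.
- by rewrite (row_mxEr F (bvec F) i l : _ = bvec F i l) ord1.
Qed.

Lemma embed3E (R : realType) (m : 'cV[R]_2) : embed3 m = col_mx m 0.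
Proof.
apply/matrixP => i j; rewrite mxE ord1 -[i](@splitK 2 1).
case: (@fintype.split 2 1 i) => l /=.
- rewrite (col_mxEu m 0 l 0 : _ = m l 0) ltn_ord.
  by congr (m _ 0); apply/val_inj; rewrite /= inordK.
- by rewrite (col_mxEd m 0 l 0 : _ = (0 : 'cV[R]_1) l 0) mxE.
Qed.

Lemma powR13_cube (R : realType) (x : R) : 0 <= x -> (x `^ (1/3)) ^+ 3 = x.
Proof.
move=> x_ge0; rewrite -powR_mulrn ?powR_ge0 // -powRrM.
by rewrite mul1r mulVf ?pnatr_eq0 // powRr1.
Qed.

Lemma powR13_neq (R : realType) (a b : R) : 0 < a -> 0 < b ->
  (a / b) `^ (1/3) != 1 -> a `^ (1/3) != b `^ (1/3).
Proof.
move=> a_gt0 b_gt0; apply: contra => /eqP ab.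
rewrite -(powR13_cube (ltW b_gt0)) -(powR13_cube (ltW a_gt0)) ab.
by rewrite divff ?powR1 // expf_neq0 // gt_eqF // powR_gt0.
Qed.

Lemma invmx_Lmat (R : realType) (s : R) (n : 'cV[R]_3) : -1 < s -> n^T *m n = 1%:M ->
  invmx (Lmat s n) = (s + 1) `^ (1/3) *: (1%:M - (s / (s + 1)) *: (n *m n^T)).
Proof.
move=> s_gt n_unit; have s1_neq0 : 1 + s != 0 by rewrite gt_eqF //; lra.
have [A_unit _] := mulmx1_unit (mulmx_rank_one_update n_unit s1_neq0).
rewrite /Lmat invmxZ ?unitmxZ ?unitfE ?gt_eqF ?powR_gt0 //; last lra.
by rewrite invmx_rank_one_update // powRN invrK addrC.
Qed.

Lemma W3DE (R : realType) (s s0 : R) (m : 'cV[R]_2) (G : 'M[R]_3) (v : 'cV[R]_3) :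
  -1 < s -> -1 < s0 -> G *m embed3 m = v -> 0 < dotmx v v ->
  W3D s s0 m G = (s + 1) `^ (1/3) / (s0 + 1) `^ (1/3) *
    (\tr (G^T *m G) + s0 * dotmx v v
     - s / (s + 1) * (dotmx (G^T *m v) (G^T *m v) / dotmx v v)
     - s / (s + 1) * s0 * dotmx v v) - 3.
Proof.
move=> s_gt s0_gt Gm N_gt0; set N := dotmx v v.
set w := (vnorm3 v)^-1; have w2 : w ^+ 2 = N^-1 by rewrite exprVn vnorm3_sqr.
have n_unit : (w *: v)^T *m (w *: v) = 1%:M.
  by rewrite mx11_dotmx dotmxZl dotmxZr mulrA -expr2 w2 mulVf // gt_eqF.
rewrite /W3D /= Gm -/w; set n := w *: v.
rewrite invmx_Lmat // /Lmat powRN mxtrace_scale_sandwich mxtrace_rank_one_sandwich Gm.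
rewrite /n -scalemxAr dotmxZl dotmxZr dotmxZl -/N (mulrA w w) -expr2 exprMn w2.
by rewrite [N^-1 * _]mulrC expr2 mulKf // gt_eqF.
Qed.

Section ScalarBounds.
Variable R : realFieldType.

Lemma gram_energy_ge (s s0 N X Q : R) : -1 < s -> 0 < N -> N * X = Q + 1 -> N ^+ 2 <= Q ->
  (s0 + 1) / (s + 1) * N + N^-1 + 1
  <= X + 1 + s0 * N - s / (s + 1) * (Q / N) - s / (s + 1) * s0 * N.
Proof.
move=> s_gt N_gt0 NXQ N2Q; have s1_gt0 : 0 < s + 1 by lra.
have -> : X + 1 + s0 * N - s / (s + 1) * (Q / N) - s / (s + 1) * s0 * N
          = (Q / N + s0 * N) / (s + 1) + N^-1 + 1.
  have -> : X = (Q + 1) / N by rewrite -NXQ mulrC mulKf // gt_eqF.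
  by field; rewrite !gt_eqF.
rewrite !lerD2r mulrAC ler_pM2r ?invr_gt0 // mulrDl mul1r addrC lerD2r.
by rewrite ler_pdivlMr // -expr2.
Qed.

Lemma am_gm_scaled (t N : R) : 0 < t -> 0 < N -> 2 / t <= N / t ^+ 4 + t ^+ 2 / N.
Proof.
move=> t_gt0 N_gt0; rewrite -subr_ge0.
have -> : N / t ^+ 4 + t ^+ 2 / N - 2 / t = (N - t ^+ 3) ^+ 2 / (t ^+ 4 * N).
  by field; rewrite !gt_eqF.
by rewrite divr_ge0 ?sqr_ge0 // ltW // mulr_gt0 // exprn_gt0.
Qed.

Lemma ratio_energy_ge (al be t N : R) : 0 < be -> 0 < t -> t ^+ 2 = al / be -> 0 < N ->
  2 / t + t ^+ 2 <= al / be * (be ^+ 3 / al ^+ 3 * N + N^-1 + 1).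
Proof.
move=> be_gt0 t_gt0 t2 N_gt0.
have al_def : al = t ^+ 2 * be by rewrite t2 divfK // gt_eqF.
have -> : al / be * (be ^+ 3 / al ^+ 3 * N + N^-1 + 1) = N / t ^+ 4 + t ^+ 2 / N + t ^+ 2.
  by rewrite al_def; field; rewrite !gt_eqF.
by rewrite lerD2r am_gm_scaled.
Qed.

Lemma cubic_gap_gt0 (t : R) : 0 < t -> t != 1 -> 0 < 2 / t + t ^+ 2 - 3.
Proof.
move=> t_gt0 t_neq1.
have -> : 2 / t + t ^+ 2 - 3 = (t - 1) ^+ 2 * (t + 2) / t by field; rewrite gt_eqF.
by rewrite divr_gt0 // mulr_gt0 ?exprn_even_gt0 ?subr_eq0 //; lra.
Qed.

End ScalarBounds.

Section Augment.
Variables (R : realType) (F : 'M[R]_(3, 2)).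
Hypothesis detF : \det (F^T *m F) = 1.

Lemma augment_mul_embed3 (m : 'cV[R]_2) : augment F *m embed3 m = F *m m.
Proof. by rewrite augmentE embed3E (mul_row_col F (bvec F)) mulmx0 addr0. Qed.

Lemma mxtrace_augment : \tr ((augment F)^T *m augment F) = \tr (F^T *m F) + 1.
Proof.
rewrite mxtrace_mulC augmentE (tr_row_mx F (bvec F)) (mul_row_col F (bvec F)).
by rewrite mxtraceD mxtrace_outer dotmx_bvec // mxtrace_mulC.
Qed.

Lemma dotmx_trmx_augment (u : 'cV[R]_2) :
  dotmx ((augment F)^T *m (F *m u)) ((augment F)^T *m (F *m u))
  = dotmx (F^T *m F *m u) (F^T *m F *m u).
Proof.
have bF : (bvec F)^T *m F = 0.
  by apply: trmx_inj; rewrite trmx_mul trmxK trmx_mul_bvec // trmx0.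
rewrite augmentE (tr_row_mx F (bvec F)) (mul_col_mx F^T (bvec F)^T).
rewrite !mulmxA bF mul0mx /dotmx (tr_col_mx (F^T *m F *m u)) trmx0.
by rewrite (mul_row_col (F^T *m F *m u)^T (0 : 'M[R]_(1, 1))) mulmx0 addr0.
Qed.

Variable m : 'cV[R]_2.
Hypothesis m_unit : dotmx m m = 1.

Lemma dotmx_gram_relations :
  dotmx (F *m m) (F *m m) * \tr (F^T *m F) = dotmx (F^T *m F *m m) (F^T *m F *m m) + 1
  /\ dotmx (F *m m) (F *m m) ^+ 2 <= dotmx (F^T *m F *m m) (F^T *m F *m m).
Proof.
have -> : dotmx (F *m m) (F *m m) = dotmx m (F^T *m F *m m).
  by rewrite dotmx_mulmxr mulmxA dotmxC.
split; last exact: dotmx_unit_sqr_le.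
by rewrite dotmx_mx22_sym_det1 ?trmx_mul ?trmxK // mulrC subrK.
Qed.

Lemma dotmx_gram_gt0 : 0 < dotmx (F *m m) (F *m m).
Proof.
have [NXQ N2Q] := dotmx_gram_relations.
have Q_ge0 := le_trans (sqr_ge0 _) N2Q.
rewrite lt_def dotmx_ge0 andbT; apply/eqP => N0.
by move: NXQ; rewrite N0 mul0r; lra.
Qed.

Lemma W3D_augment_ge (s s0 : R) : -1 < s -> -1 < s0 ->
  (s + 1) `^ (1/3) / (s0 + 1) `^ (1/3) *
    ((s0 + 1) / (s + 1) * dotmx (F *m m) (F *m m) + (dotmx (F *m m) (F *m m))^-1 + 1) - 3
  <= W3D s s0 m (augment F).
Proof.
move=> s_gt s0_gt; have [NXQ N2Q] := dotmx_gram_relations.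
rewrite (W3DE s_gt s0_gt (augment_mul_embed3 m) dotmx_gram_gt0).
rewrite mxtrace_augment dotmx_trmx_augment lerD2r ler_pM2l; last first.
  by rewrite divr_gt0 // powR_gt0 //; lra.
exact: gram_energy_ge dotmx_gram_gt0 NXQ N2Q.
Qed.

End Augment.

Theorem lemma2p5 (R : realType) (s s0 : R) (m : 'cV[R]_2) :
  -1 < s -> -1 < s0 -> (m^T *m m) 0 0 = 1 ->
  ((s + 1) / (s0 + 1)) `^ (1 / 3) != 1 ->
  exists c : R, 0 < c /\
    forall F : 'M[R]_(3,2), \det (F^T *m F) = 1 ->
      c <= W3D s s0 m (augment F).
Proof.
move=> s_gt s0_gt m_unit ratio_neq1.
have s1_gt0 : 0 < s + 1 by lra.
have s01_gt0 : 0 < s0 + 1 by lra.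
have al_neq_be := powR13_neq s1_gt0 s01_gt0 ratio_neq1.
set al := (s + 1) `^ (1/3) in al_neq_be *; set be := (s0 + 1) `^ (1/3) in al_neq_be *.
have be_gt0 : 0 < be by exact: powR_gt0.
set t := Num.sqrt (al / be).
have t2 : t ^+ 2 = al / be by rewrite sqr_sqrtr // divr_ge0 // ltW // powR_gt0.
have t_gt0 : 0 < t by rewrite sqrtr_gt0 divr_gt0 // powR_gt0.
have t_neq1 : t != 1.
  apply: contra al_neq_be => /eqP t1.
  by rewrite -[al](divfK (lt0r_neq0 be_gt0)) -t2 t1 expr1n mul1r.
exists (2 / t + t ^+ 2 - 3); split; first exact: cubic_gap_gt0.
move=> F detF; apply: le_trans (W3D_augment_ge detF m_unit s_gt s0_gt).
rewrite -/al -/be lerD2r -(powR13_cube (ltW s1_gt0)) -(powR13_cube (ltW s01_gt0)).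
exact: ratio_energy_ge be_gt0 t_gt0 t2 (dotmx_gram_gt0 detF m_unit).
Qed.
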